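(* Fix $p\in(0,1)$. Under the Alternating Path Randomized Design, let $\mathcal{P}_i=(v_{i,1},\dots,v_{i,k(i)+1})$ be a path component (not a cycle), write $k=k(i)$ and $y_j=Y_{v_{i,j},v_{i,j+1}}$. Then $\mathrm{Var}(\hat\Gamma_i)\le\tilde\sigma_i^2$, where \[\tilde\sigma_i^2:=\Big(\frac1p+1\Big)\sum_{j=1}^{k}y_j^2+\sum_{j=2}^{k-1}y_j^2+2\sum_{\substack{1\le j\le k-2\\ j+2\le q\le k}}p^{q-j-1}y_jy_q.\] Moreover, with $\mathbb{P}(W_{i,j}=1)=p/(p+1)$ and $\mathbb{P}(W_{i,j}=1,W_{i,q}=1)=(p^2-(-p)^{q-j+1})/(p+1)^2$, the statistic \[\hat\sigma_i^2:=\Big(\frac1p+1\Big)\sum_{j=1}^{k}\frac{W_{i,j}y_j^2}{\mathbb{P}(W_{i,j}=1)}+\sum_{j=2}^{k-1}\frac{W_{i,j}y_j^2}{\mathbb{P}(W_{i,j}=1)}+2\sum_{\substack{1\le j\le k-2\\ j+2\le q\le k}}p^{q-j-1}\frac{y_jy_q\,W_{i,j}W_{i,q}}{\mathbb{P}(W_{i,j}=1,W_{i,q}=1)}\] satisfies $\mathbb{E}[\hat\sigma_i^2]=\tilde\sigma_i^2$.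
   Context: Setting: $2N$ agents; $\mathbb{M}^t,\mathbb{M}^c$ are one-to-one matchings (sets of unordered pairs of distinct agents, each agent in at most one pair); each pair $(a,b)$ has a fixed real potential outcome $Y_{a,b}$. The disagreement set $\triangle\mathbb{M}^{(t,c)}=(\mathbb{M}^t\cup\mathbb{M}^c)\setminus(\mathbb{M}^t\cap\mathbb{M}^c)$, viewed as a graph, has connected components, each an alternating path or cycle: a sequence $(v_{i,1},\dots,v_{i,k(i)+1})$ whose consecutive pairs $e_{i,j}=(v_{i,j},v_{i,j+1})$ are its edges, alternating between $\triangle\mathbb{M}^{(t,c)}_t=\triangle\mathbb{M}^{(t,c)}\cap\mathbb{M}^t$ and $\triangle\mathbb{M}^{(t,c)}_c=\triangle\mathbb{M}^{(t,c)}\cap\mathbb{M}^c$; a path if $v_{i,1}\ne v_{i,k(i)+1}$. Alternating Path Randomized Design with parameter $p$ on a path component: $\mathbb{P}(W_{i,1}=1)=p/(1+p)$ and for $2\le j\le k(i)$, conditionally on $W_{i,1},\dots,W_{i,j-1}$, $W_{i,j}=1$ with probability $p$ if $W_{i,j-1}=0$ and $W_{i,j}=0$ if $W_{i,j-1}=1$ (components are randomized independently). Path-level estimator $\hat\Gamma_i=\sum_{j:\,e_{i,j}\in\triangle\mathbb{M}^{(t,c)}_t}\frac{W_{i,j}Y_{e_{i,j}}}{\mathbb{P}(W_{i,j}=1)}-\sum_{j:\,e_{i,j}\in\triangle\mathbb{M}^{(t,c)}_c}\frac{W_{i,j}Y_{e_{i,j}}}{\mathbb{P}(W_{i,j}=1)}$.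 Note $\hat\sigma_i^2$ only involves outcomes of realized edges ($W=1$). *)

From mathcomp Require Import all_boot all_order all_algebra.
Unset Printing Implicit Defensive.
Import Order.TTheory GRing.Theory Num.Theory.
Local Open Scope ring_scope.

Section APRD.
Variable R : realFieldType.
Variable p : R.
Variable k : nat.

(* Treatment indicator W_{i,j} of the j-th edge of the path, 1-based (1 <= j <= k). *)
Definition Wj (w : k.-tuple bool) (j : nat) : bool := nth false w j.-1.

Definition first_law (b : bool) : R := if b then p / (1 + p) else 1 - p / (1 + p).

(* Conditional law of W_{i,j} given W_{i,j-1} = a *)
Definition trans_law (a b : bool) : R :=
  if a then (if b then 0 else 1) else (if b then p else 1 - p).

Definition aprd_pmf (w : k.-tuple bool) : R :=
  first_law (Wj w 1) * \prod_(2 <= j < k.+1) trans_law (Wj w j.-1) (Wj w j).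

Definition Exp (f : k.-tuple bool -> R) : R :=
  \sum_(w : k.-tuple bool) aprd_pmf w * f w.

Definition Var (f : k.-tuple bool -> R) : R :=
  Exp (fun w => (f w - Exp f) ^+ 2).

Definition Pr1 (j : nat) : R := Exp (fun w => (Wj w j)%:R).
Definition Pr2 (j q : nat) : R := Exp (fun w => (Wj w j && Wj w q)%:R).

(* Path-level estimator; inT j = true iff edge e_{i,j} is in the treatment
   matching (i.e. in triangle M_t), y j = Y_{e_{i,j}}. *)
Definition Gamma_hat (inT : nat -> bool) (y : nat -> R) (w : k.-tuple bool) : R :=
  \sum_(1 <= j < k.+1)
     (if inT j then 1 else -1) * ((Wj w j)%:R * y j / Pr1 j).

Definition sigma_tilde (y : nat -> R) : R :=
  (p^-1 + 1) * (\sum_(1 <= j < k.+1) y j ^+ 2)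
  + (\sum_(2 <= j < k) y j ^+ 2)
  + 2 * (\sum_(1 <= j < k.-1) \sum_(j.+2 <= q < k.+1)
           p ^+ (q - j - 1) * y j * y q).

Definition sigma_hat (y : nat -> R) (w : k.-tuple bool) : R :=
  (p^-1 + 1) * (\sum_(1 <= j < k.+1) (Wj w j)%:R * y j ^+ 2 / Pr1 j)
  + (\sum_(2 <= j < k) (Wj w j)%:R * y j ^+ 2 / Pr1 j)
  + 2 * (\sum_(1 <= j < k.-1) \sum_(j.+2 <= q < k.+1)
           p ^+ (q - j - 1) * (y j * y q * ((Wj w j)%:R * (Wj w q)%:R) / Pr2 j q)).

End APRD.

From mathcomp Require Import all_boot all_order all_algebra.
From mathcomp Require Import ring lra zify.
Import Order.TTheory GRing.Theory Num.Theory.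
Local Open Scope ring_scope.

(* The design is a stationary two-state Markov chain [W_1, ..., W_k] whose
   transition matrix [[1 - p, p], [1, 0]] has second eigenvalue [-p]; hence
   [P(W_j = 1) = pi := p / (1 + p)] and [Cov(W_j, W_q) = pi (1 - pi) (-p)^(q-j)].
   Consecutive edges of the path alternate between the two matchings, so the
   signs in [Gamma_hat] turn these covariances into [p^(q-j)] and
   [Var Gamma_hat = 1/p sum y_j^2 + 2 sum_(j<q) p^(q-j-1) y_j y_q]; the terms
   with [q = j + 1] are bounded by [2 y_j y_(j+1) <= y_j^2 + y_(j+1)^2].
   The second claim is termwise unbiasedness of inverse probability weighting;
   it needs [P(W_j = 1, W_q = 1) > 0] for [q >= j + 2], which is where [p < 1]
   is used. *)

Lemma big_tuple_cons (V : Type) (idx : V) (op : Monoid.com_law idx)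
    (T : finType) (n : nat) (F : n.+1.-tuple T -> V) :
  \big[op/idx]_(s : n.+1.-tuple T) F s =
  \big[op/idx]_(c : T) \big[op/idx]_(t : n.-tuple T) F (cons_tuple c t).
Proof.
rewrite pair_big /= (reindex (fun ct : T * n.-tuple T => cons_tuple ct.1 ct.2)) //=.
exists (fun s : n.+1.-tuple T => (thead s, behead_tuple s)).
  by move=> [c t] _; congr (_, _); apply: val_inj.
by move=> [[|c t] //= s_sz] _; apply: val_inj.
Qed.

Lemma sqr_big_nat (V : comPzRingType) (m n : nat) (F : nat -> V) :
  (\sum_(m <= i < n) F i) ^+ 2 =
  \sum_(m <= i < n) F i ^+ 2 + 2 * \sum_(m <= i < n) \sum_(i.+1 <= j < n) F i * F j.
Proof.
elim: n => [|n IH]; first by rewrite !big_geq // expr0n mulr0 addr0.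
have [lt_nm | le_mn] := ltnP n m.
  by rewrite !big_geq // expr0n mulr0 addr0.
have split_inner : \sum_(m <= i < n) \sum_(i.+1 <= j < n.+1) F i * F j =
    \sum_(m <= i < n) \sum_(i.+1 <= j < n) F i * F j + (\sum_(m <= i < n) F i) * F n.
  rewrite mulr_suml -big_split; apply: eq_big_nat => i /andP[_ lt_in].
  by rewrite big_nat_recr.
rewrite big_nat_recr //= [in RHS]big_nat_recr //=.
rewrite [in RHS]big_nat_recr //= (@big_geq _ _ _ n.+1 n.+1) // addr0.
by rewrite split_inner sqrrD IH; ring.
Qed.

Lemma addr_exprN_gt0 (R : realDomainType) (p : R) (d : nat) :
  0 < p -> p < 1 -> (1 < d)%N -> 0 < p + (- p) ^+ d.
Proof.
case: d => [|d] // p_gt0 p_lt1 d_gt0.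
have pd_lt1 : p ^+ d < 1 by rewrite exprn_ilt1 ?ltW // -lt0n.
have : - p ^+ d.+1 <= (- p) ^+ d.+1.
  by apply: lerNnormlW; rewrite normrX normrN gtr0_norm.
rewrite exprS; nra.
Qed.

Lemma adjacent_products_le (R : realDomainType) (y : nat -> R) (n : nat) :
  2 * \sum_(1 <= j < n) y j * y j.+1 <=
  \sum_(1 <= j < n.+1) y j ^+ 2 + \sum_(2 <= j < n) y j ^+ 2.
Proof.
have amgm : 2 * \sum_(1 <= j < n) y j * y j.+1 <=
    \sum_(1 <= j < n) y j ^+ 2 + \sum_(2 <= j < n.+1) y j ^+ 2.
  rewrite (big_add1 _ _ 1 n.+1) /= -big_split mulr_sumr /=; apply: ler_sum => j _.
  by have := sqr_ge0 (y j - y j.+1); rewrite sqrrB; lra.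
apply: (le_trans amgm); case: n {amgm} => [|[|n]].
- by rewrite !big_geq.
- by rewrite big_nat1 !big_geq // !addr0 sqr_ge0.
rewrite (big_nat_recr n.+2 2) // (big_nat_recr n.+2 1) //=.
by rewrite addrAC addrA.
Qed.

Lemma sum_upper_split (R : comPzRingType) (p : R) (y : nat -> R) (n : nat) :
  \sum_(1 <= j < n.+1) \sum_(j.+1 <= q < n.+1) p ^+ (q - j - 1) * y j * y q =
  \sum_(1 <= j < n) y j * y j.+1 +
  \sum_(1 <= j < n.-1) \sum_(j.+2 <= q < n.+1) p ^+ (q - j - 1) * y j * y q.
Proof.
case: n => [|n]; first by rewrite !big_geq // addr0.
rewrite big_nat_recr //= (@big_geq _ _ _ n.+2 n.+2) // addr0.
rewrite (@eq_big_nat _ _ _ 1 n.+1 _ (fun j => y j * y j.+1 +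
    \sum_(j.+2 <= q < n.+2) p ^+ (q - j - 1) * y j * y q)); last first.
  by move=> j /andP[_ lt_jn]; rewrite big_ltn ?ltnS // subSn // subnn expr0 mul1r.
rewrite big_split /=; congr (_ + _); case: n => [|n]; first by rewrite !big_geq.
by rewrite big_nat_recr //= (@big_geq _ _ _ n.+3 n.+3) // addr0.
Qed.

Section AlternatingChain.
Variables (R : realFieldType) (p : R).

Fixpoint path_weight (b : bool) (s : seq bool) : R :=
  if s is c :: s' then trans_law R p b c * path_weight c s' else 1.

(* Expectation of [F (X_1, ..., X_n)] for the chain started at [X_0 = b]. *)
Definition chainE (n : nat) (b : bool) (F : seq bool -> R) : R :=
  \sum_(t : n.-tuple bool) path_weight b t * F t.

Lemma chainE_cons n b F :
  chainE n.+1 b F = \sum_c trans_law R p b c * chainE n c (fun t => F (c :: t)).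
Proof.
rewrite /chainE big_tuple_cons.
apply: eq_bigr => c _; rewrite mulr_sumr; apply: eq_bigr => t _.
by rewrite mulrA.
Qed.

Lemma chainE_const n b a : chainE n b (fun _ => a) = a.
Proof.
elim: n b => [|n IH] b.
  rewrite /chainE (big_pred1 [tuple]) ?mul1r // => t.
  by symmetry; apply/eqP; exact: tuple0.
rewrite chainE_cons; under eq_bigr do rewrite IH.
by rewrite big_bool /trans_law; case: b => /=; ring.
Qed.

Hypothesis p1_neq0 : 1 + p != 0.

Definition pi : R := p / (1 + p).

(* [P(X_m = true | X_0 = b)] *)
Definition ptrue (m : nat) (b : bool) : R := pi + (b%:R - pi) * (- p) ^+ m.

Lemma ptrue0 b : ptrue 0 b = b%:R.
Proof. by rewrite /ptrue expr0 mulr1 addrC subrK. Qed.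

Lemma ptrue_true m : ptrue m true = (p + (- p) ^+ m) / (1 + p).
Proof. by rewrite /ptrue /pi /=; field. Qed.

Lemma ptrue_step m b : \sum_c trans_law R p b c * ptrue m c = ptrue m.+1 b.
Proof. by rewrite big_bool /ptrue /pi /trans_law exprS; case: b => /=; field. Qed.

Lemma chainE_nth n m b :
  (m < n)%N -> chainE n b (fun s => (nth false s m)%:R) = ptrue m.+1 b.
Proof.
elim: n m b => [|n IH] [|m] b //= lt_mn; rewrite chainE_cons -ptrue_step.
  by apply: eq_bigr => c _; rewrite chainE_const ptrue0.
by apply: eq_bigr => c _; rewrite IH.
Qed.

Lemma chainE_nth_and n m r b : (m <= r)%N -> (r < n)%N ->
  chainE n b (fun s => (nth false s m && nth false s r)%:R) =
  ptrue m.+1 b * ptrue (r - m) true.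
Proof.
elim: n m r b => [|n IH] [|m] [|r] b //= le_mr lt_rn.
- rewrite subnn ptrue0 mulr1 -(@chainE_nth n.+1 0 b lt_rn).
  by apply: eq_bigr => t _; rewrite andbb.
- rewrite chainE_cons -ptrue_step mulr_suml !big_bool /= !ptrue0.
  by rewrite chainE_const chainE_nth // subn0 mulr1 !mulr0 mul0r.
- rewrite chainE_cons -ptrue_step mulr_suml subSS.
  by apply: eq_bigr => c _; rewrite IH // mulrA.
Qed.

Lemma first_law_trans b : \sum_a first_law R p a * trans_law R p a b = first_law R p b.
Proof. by rewrite big_bool /trans_law /first_law; case: b => /=; field. Qed.

Lemma first_law_ptrue m : \sum_a first_law R p a * ptrue m a = pi.
Proof. by rewrite big_bool /ptrue /first_law /pi /=; field. Qed.

End AlternatingChain.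

Section Design.
Variables (R : realFieldType) (p : R) (k : nat).
Hypothesis p1_neq0 : 1 + p != 0.
Hypothesis k_gt0 : (0 < k)%N.

Notation E := (Exp R p k).

Lemma aprd_pmf_cons n a (t : n.-tuple bool) :
  aprd_pmf R p n.+1 (cons_tuple a t) = first_law R p a * path_weight R p a t.
Proof.
rewrite /aprd_pmf /Wj /=; congr (_ * _).
elim: n a t => [|n IH] a t.
  by rewrite [t]tuple0 big_geq.
case: t => [[|c t] //= t_sz].
rewrite big_nat_recl //= -(IH c (Tuple (t_sz : size t == n))) /=.
by congr (_ * _); apply: eq_big_nat => -[|[|j]].
Qed.

(* By stationarity of [first_law] we may prepend a virtual [W_0 ~ first_law]:
   then [W_j] is the state of the chain [j] steps after [W_0]. *)
Lemma Exp_chainE (G : seq bool -> R) :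
  E (fun w => G w) = \sum_a first_law R p a * chainE R p k a G.
Proof.
case: k k_gt0 => // n _.
have -> : Exp R p n.+1 (fun w => G w) =
    \sum_a first_law R p a * chainE R p n a (fun t => G (a :: t)).
  rewrite /Exp big_tuple_cons; apply: eq_bigr => a _.
  by rewrite /chainE mulr_sumr; apply: eq_bigr => t _; rewrite aprd_pmf_cons mulrA.
under [RHS]eq_bigr do rewrite chainE_cons mulr_sumr.
rewrite [RHS]exchange_big; apply: eq_bigr => c _.
by rewrite -first_law_trans // mulr_suml; apply: eq_bigr => a _; rewrite mulrA.
Qed.

Lemma eq_Exp f g : f =1 g -> E f = E g.
Proof. by move=> fg; apply: eq_bigr => w _; rewrite fg. Qed.

Lemma ExpD f g : E (fun w => f w + g w) = E f + E g.
Proof. by rewrite /Exp -big_split; apply: eq_bigr => w _; rewrite mulrDr. Qed.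

Lemma ExpZ a f : E (fun w => a * f w) = a * E f.
Proof. by rewrite /Exp mulr_sumr; apply: eq_bigr => w _; rewrite mulrCA. Qed.

Lemma Exp_sum (I : Type) (r : seq I) (P : pred I) (F : I -> k.-tuple bool -> R) :
  E (fun w => \sum_(i <- r | P i) F i w) = \sum_(i <- r | P i) E (F i).
Proof.
rewrite /Exp exchange_big; apply: eq_bigr => w _.
by rewrite mulr_sumr.
Qed.

Lemma Exp1 : E (fun _ => 1) = 1.
Proof.
rewrite (Exp_chainE (fun _ => 1)); under eq_bigr do rewrite chainE_const mulr1.
by rewrite big_bool /first_law /=; field.
Qed.

Lemma Pr1E j : (0 < j <= k)%N -> Pr1 R p k j = pi R p.
Proof.
move=> /andP[j_gt0 le_jk]; rewrite /Pr1 /Wj (Exp_chainE (fun s => (nth false s j.-1)%:R)).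
rewrite -(@first_law_ptrue R p p1_neq0 j).
by apply: eq_bigr => a _; rewrite chainE_nth // prednK.
Qed.

Lemma Pr2E j q : (0 < j <= q)%N -> (q <= k)%N ->
  Pr2 R p k j q = pi R p * ptrue R p (q - j) true.
Proof.
move=> /andP[j_gt0 le_jq] le_qk; rewrite /Pr2 /Wj.
rewrite (Exp_chainE (fun s => (nth false s j.-1 && nth false s q.-1)%:R)).
rewrite -(@first_law_ptrue R p p1_neq0 j) mulr_suml; apply: eq_bigr => a _.
rewrite chainE_nth_and ?prednK ?mulrA //; try lia.
by congr (_ * ptrue R p _ true); lia.
Qed.

Lemma cov_Wj j q : (0 < j <= q)%N -> (q <= k)%N ->
  E (fun w => ((Wj k w j)%:R - pi R p) * ((Wj k w q)%:R - pi R p)) =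
  pi R p * (1 - pi R p) * (- p) ^+ (q - j).
Proof.
move=> jq qk; have jk : (0 < j <= k)%N by lia.
rewrite (@eq_Exp _ (fun w => (Wj k w j && Wj k w q)%:R + (- pi R p * (Wj k w q)%:R +
    (- pi R p * (Wj k w j)%:R + pi R p ^+ 2 * 1)))); last first.
  by move=> w; rewrite -mulnb natrM; ring.
rewrite !ExpD !ExpZ Exp1 -/(Pr2 R p k j q) -/(Pr1 R p k j) -/(Pr1 R p k q).
by rewrite Pr2E // !Pr1E /ptrue //=; [ring | lia].
Qed.

Lemma Exp_ratio f c : E f != 0 -> E (fun w => c * f w / E f) = c.
Proof.
move=> Ef_neq0; rewrite (@eq_Exp _ (fun w => c / E f * f w)) ?ExpZ ?divfK //.
by move=> w; rewrite mulrAC.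
Qed.

Lemma Exp_Wj_ratio j c :
  Pr1 R p k j != 0 -> E (fun w => (Wj k w j)%:R * c / Pr1 R p k j) = c.
Proof.
move=> Pr1_neq0; rewrite -[RHS](Exp_ratio _ c Pr1_neq0).
by apply: eq_Exp => w; rewrite [c * _]mulrC.
Qed.

Lemma Exp_Wj2_ratio j q c : Pr2 R p k j q != 0 ->
  E (fun w => c * ((Wj k w j)%:R * (Wj k w q)%:R) / Pr2 R p k j q) = c.
Proof.
move=> Pr2_neq0; rewrite -[RHS](Exp_ratio _ c Pr2_neq0).
by apply: eq_Exp => w; rewrite -natrM mulnb.
Qed.

End Design.

Section Estimator.
Variables (R : realFieldType) (p : R) (k : nat) (inT : nat -> bool) (y : nat -> R).
Hypothesis p_gt0 : 0 < p.
Hypothesis k_gt0 : (0 < k)%N.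
Hypothesis inT_alternates : forall j, (1 <= j < k)%N -> inT j.+1 = ~~ inT j.

Notation E := (Exp R p k).
Notation Gamma := (Gamma_hat R p k inT y).

Let p_neq0 : p != 0. Proof. exact: lt0r_neq0. Qed.
Let p1_neq0 : 1 + p != 0. Proof. by rewrite lt0r_neq0 // addr_gt0. Qed.
Let pi_neq0 : pi R p != 0. Proof. by rewrite mulf_neq0 ?invr_neq0. Qed.

Definition edge_sign (j : nat) : R := if inT j then 1 else -1.

Lemma edge_sign_mul j q : (0 < j <= q)%N -> (q <= k)%N ->
  edge_sign j * edge_sign q = (-1) ^+ (q - j).
Proof.
move=> /andP[j_gt0 le_jq].
have [d ->] : exists d, q = (j + d)%N by exists (q - j)%N; rewrite subnKC.
rewrite addKn; elim: d => [|d IH] le_jdk.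
  by rewrite addn0 /edge_sign; case: (inT j) => /=; ring.
have le_jd : (j + d <= k)%N by rewrite addnS in le_jdk; exact: ltnW.
rewrite exprS -(IH le_jd) /edge_sign addnS inT_alternates; last by lia.
by case: (inT j); case: (inT (j + d)) => /=; ring.
Qed.

Definition centered_term (j : nat) (w : k.-tuple bool) : R :=
  edge_sign j * y j / pi R p * ((Wj k w j)%:R - pi R p).

Lemma Pr1_neq0 j : (0 < j <= k)%N -> Pr1 R p k j != 0.
Proof. by move=> jk; rewrite Pr1E. Qed.

Lemma Exp_Gamma_hat : E Gamma = \sum_(1 <= j < k.+1) edge_sign j * y j.
Proof.
rewrite /Gamma_hat Exp_sum; apply: eq_big_nat => j jk.
by rewrite ExpZ Exp_Wj_ratio ?Pr1_neq0.
Qed.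

Lemma Gamma_hat_centered w : Gamma w - E Gamma = \sum_(1 <= j < k.+1) centered_term j w.
Proof.
rewrite Exp_Gamma_hat /Gamma_hat -sumrB; apply: eq_big_nat => j jk.
by rewrite Pr1E // -/(edge_sign j) /centered_term; field.
Qed.

Lemma Exp_centered_term_mul j q : (0 < j <= q)%N -> (q <= k)%N ->
  E (fun w => centered_term j w * centered_term q w) = p ^+ (q - j) * y j * y q / p.
Proof.
move=> jq qk.
rewrite (@eq_Exp R p k _ (fun w => edge_sign j * edge_sign q * (y j * y q / pi R p ^+ 2) *
    (((Wj k w j)%:R - pi R p) * ((Wj k w q)%:R - pi R p)))); last first.
  by move=> w; rewrite /centered_term; field.
have sign_cancel : edge_sign j * edge_sign q * (- p) ^+ (q - j) = p ^+ (q - j).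
  by rewrite edge_sign_mul // -exprMn mulN1r opprK.
rewrite ExpZ cov_Wj // -sign_cancel /pi; field; exact/andP.
Qed.

Lemma Var_Gamma_hat : Var R p k Gamma =
  p^-1 * \sum_(1 <= j < k.+1) y j ^+ 2 +
  2 * \sum_(1 <= j < k.+1) \sum_(j.+1 <= q < k.+1) p ^+ (q - j - 1) * y j * y q.
Proof.
rewrite /Var; under eq_Exp => w do rewrite Gamma_hat_centered sqr_big_nat.
rewrite ExpD ExpZ !Exp_sum [p^-1 * _]mulr_sumr; congr (_ + 2 * _).
  apply: eq_big_nat => j /andP[j_gt0 jk].
  rewrite (@eq_Exp R p k _ (fun w => centered_term j w * centered_term j w)); last first.
    by move=> w; rewrite expr2.
  by rewrite Exp_centered_term_mul ?j_gt0 ?leqnn // subnn expr0 mul1r mulrC expr2.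
apply: eq_big_nat => j /andP[j_gt0 jk]; rewrite Exp_sum.
apply: eq_big_nat => q /andP[jq qk].
rewrite Exp_centered_term_mul ?j_gt0 ?(ltnW jq) //.
by rewrite -subnDA addn1 -(subnSK jq) exprS; field.
Qed.

Hypothesis p_lt1 : p < 1.

Lemma Pr2_neq0 j q : (0 < j)%N -> (j.+2 <= q <= k)%N -> Pr2 R p k j q != 0.
Proof.
move=> j_gt0 /andP[jq qk]; have le_jq : (0 < j <= q)%N by lia.
rewrite Pr2E // ptrue_true //.
rewrite mulf_neq0 // mulf_neq0 ?invr_neq0 // lt0r_neq0 // addr_exprN_gt0 //.
by rewrite ltn_subRL addn1.
Qed.

Lemma Exp_sigma_hat : E (sigma_hat R p k y) = sigma_tilde R p k y.
Proof.
rewrite /sigma_hat /sigma_tilde !ExpD !ExpZ !Exp_sum; congr (_ * _ + _ + 2 * _).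
- by apply: eq_big_nat => j jk; rewrite Exp_Wj_ratio // Pr1_neq0.
- by apply: eq_big_nat => j jk; rewrite Exp_Wj_ratio // Pr1_neq0 //; lia.
apply: eq_big_nat => j jk; rewrite Exp_sum; apply: eq_big_nat => q qk.
by rewrite ExpZ Exp_Wj2_ratio ?mulrA // Pr2_neq0 //; lia.
Qed.

End Estimator.

Theorem proposition7 (R : realFieldType) (p : R) (k : nat)
    (inT : nat -> bool) (y : nat -> R) :
  0 < p -> p < 1 -> (0 < k)%N ->
  (forall j : nat, (1 <= j < k)%N -> inT j.+1 = ~~ inT j) ->
  @Var R p k (@Gamma_hat R p k inT y) <= @sigma_tilde R p k y /\
  @Exp R p k (@sigma_hat R p k y) = @sigma_tilde R p k y.
Proof.
move=> p_gt0 p_lt1 k_gt0 inT_alternates.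
split; last exact: Exp_sigma_hat.
rewrite Var_Gamma_hat // sum_upper_split /sigma_tilde.
have := @adjacent_products_le _ y k.
lra.
Qed.
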